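(* Let $v_1,\dots,v_m$ be nonzero vectors spanning $\mathbb{R}^n$ ($m\ge n$), and let $c=(c_i)_{i=1}^m$ with $c_i>0$ and $\sum_i c_i=n$. Define $\phi:\mathbb{R}^m\to\mathbb{R}$ by $\phi(x_1,\dots,x_m)=\log\det\big(\sum_{i=1}^m e^{x_i}v_i\otimes v_i\big)$, and let $\phi^*(y)=\sup_{x\in\mathbb{R}^m}(\langle y,x\rangle-\phi(x))$ be its Fenchel conjugate, with $\mathrm{dom}(\phi^* )=\{y;\ \phi^*(y)<+\infty\}$. Let $D_c=\inf\{\det(\sum_i\lambda_iv_i\otimes v_i)/\prod_i\lambda_i^{c_i};\ \lambda_i>0\}$ and $K=\mathrm{conv}\{1_I;\ |I|=n,\ d_I\ne0\}$. Then: (1) $\phi$ is convex; (2) $D_c=\exp(-\phi^*(c))$ (with $\exp(-\infty)=0$); (3) $D_c>0$ if and only if $c\in\mathrm{dom}(\phi^* )$; (4) the infimum $D_c$ is attained if and only if the supremum defining $\phi^*(c)$ is attained; (5) $\mathrm{dom}(\phi^* )=K$; (6) $D_c$ is attained whenever $c$ belongs to the relative interior of $K$.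
   Context: For $I\subset\{1,\dots,m\}$ with $|I|=n$: $d_I=\det((v_i)_{i\in I})^2$ and $1_I\in\mathbb{R}^m$ is the indicator vector of $I$. $v\otimes v=vv^T$. *)

From HB Require Import structures.
From mathcomp Require Import all_boot all_order all_algebra.
From mathcomp Require Import all_classical all_reals all_analysis.
Set Implicit Arguments. Unset Strict Implicit. Unset Printing Implicit Defensive.
Import Order.TTheory GRing.Theory Num.Theory.
Local Open Scope classical_set_scope.
Local Open Scope ring_scope.

Section Defs.
Variables (R : realType) (n m : nat) (v : 'I_m -> 'cV[R]_n).

Definition tens (u : 'cV[R]_n) : 'M[R]_n := u *m u^T.

Definition dotm (y x : 'rV[R]_m) : R := \sum_(i < m) y 0 i * x 0 i.

Definition phi (x : 'rV[R]_m) : R :=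
  ln (\det (\sum_(i < m) expR (x 0 i) *: tens (v i))).

Definition phistar (y : 'rV[R]_m) : \bar R :=
  ereal_sup (range (fun x : 'rV[R]_m => (dotm y x - phi x)%:E)).

Definition Dratio (c lam : 'rV[R]_m) : R :=
  \det (\sum_(i < m) lam 0 i *: tens (v i)) / \prod_(i < m) (lam 0 i `^ c 0 i).

Definition posvec (lam : 'rV[R]_m) : Prop := forall i, 0 < lam 0 i.

Definition Dc (c : 'rV[R]_m) : R := inf [set Dratio c lam | lam in posvec].

(* d_I = det((v_i)_{i in I})^2, columns in increasing order of i;
   only meaningful (and only used) when #|I| = n. *)
Definition dI (I : {set 'I_m}) : R :=
  (\det (\matrix_(k < n, j < n) nth 0 [seq v i k 0 | i <- enum I] j)) ^+ 2.

Definition ind (I : {set 'I_m}) : 'rV[R]_m := \row_(i < m) ((i \in I)%:R).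

Definition admissible (I : {set 'I_m}) : bool := (#|I| == n) && (dI I != 0).

Definition K : set 'rV[R]_m :=
  [set y | exists w : {set 'I_m} -> R,
     [/\ forall I, 0 <= w I, forall I, ~~ admissible I -> w I = 0,
         \sum_I w I = 1 & y = \sum_I w I *: ind I]].

Definition affK : set 'rV[R]_m :=
  [set y | exists w : {set 'I_m} -> R,
     [/\ forall I, ~~ admissible I -> w I = 0,
         \sum_I w I = 1 & y = \sum_I w I *: ind I]].

(* relative interior of K (interior relative to its affine hull, for the
   usual topology of R^m, described via sup-norm balls) *)
Definition relint_K : set 'rV[R]_m :=
  [set c | K c /\ exists e : R, 0 < e /\
     forall y, affK y -> (forall i, `|y 0 i - c 0 i| < e) -> K y].

End Defs.

(* By the Cauchy-Binet formula, det (sum_i l_i v_i v_i^T) = sum_(|I| = n) d_I prod_(i in I) l_i,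
   so phi x = ln (sum_(I admissible) d_I exp <1_I, x>) is the logarithm of an exponential sum
   with positive coefficients whose exponent vectors are the vertices 1_I of K.  Such a
   function is convex by Hoelder's inequality, and the substitution lam = exp x turns the
   ratio defining D_c into exp (-(<c, x> - phi x)), which gives (2)-(4).  For (5), each
   <1_I, x> - phi x is at most -ln d_I, which bounds phi^* on K; off K, the direction z from
   the point of K nearest to y separates y from K, and <y, t z> - phi (t z) grows linearly
   in t.  For (6), as sum_i c_i = n the objective <c, x> - phi x is invariant under
   x |-> x + s 1; if c is in the relative interior of K then c + d (1_I - 1_J) is in K for
   some d > 0, which bounds every <1_I - 1_J, x> on a superlevel set of the objective, so
   after normalisation the maximisation takes place on a compact set. *)

From mathcomp Require Import all_boot all_order all_algebra fingroup perm.
From mathcomp Require Import all_classical all_reals all_analysis.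
From mathcomp Require Import ring lra.
Set Implicit Arguments. Unset Strict Implicit. Unset Printing Implicit Defensive.
Import Order.TTheory GRing.Theory Num.Theory.
Local Open Scope classical_set_scope.
Local Open Scope ring_scope.

Lemma card_inj_ffuns_onto (D T : finType) (I : {set T}) :
  #|[set f : {ffun D -> T} | injectiveb f && (f @: [set: D]%SET == I)]%SET| =
  ((#|I| == #|D|) * (#|D|)`!)%N.
Proof.
have [cardI | cardI] := eqVneq #|I| #|D|; last first.
  apply/eqP; rewrite cards_eq0; apply/eqP/setP => f; rewrite !inE.
  apply/negbTE/andP => -[/injectiveP f_inj /eqP fI].
  by move/eqP: cardI; rewrite -fI card_imset // cardsT.
rewrite mul1n -ffactnn -{1}cardI -card_inj_ffuns_on; apply: eq_card => f.
rewrite !inE; apply/andP/andP => [[f_inj /eqP <-] | [/forallP f_on f_inj]].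
  by split=> //; apply/forallP => x; apply: imset_f.
split=> //; rewrite eqEcard card_imset ?cardsT ?cardI ?leqnn ?andbT; last exact/injectiveP.
by apply/fintype.subsetP => _ /imsetP[x _ ->].
Qed.

Lemma det_col_perm (R : comNzRingType) n (s : 'S_n) (A : 'M[R]_n) :
  \det (col_perm s A) = (-1) ^+ s * \det A.
Proof. by rewrite col_permE det_mulmx det_perm odd_permV mulrC. Qed.

Section CauchyBinet.
Variables (R : realType) (n m : nat) (v : 'I_m -> 'cV[R]_n).

Definition vcols (g : 'I_n -> 'I_m) : 'M[R]_n := \matrix_(k, j) v (g j) k 0.

Lemma vcols_perm (g : 'I_n -> 'I_m) (s : 'S_n) :
  vcols (g \o s) = col_perm s (vcols g).
Proof. by apply/matrixP => i j; rewrite !mxE. Qed.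

Lemma det_vcols_noninj (g : 'I_n -> 'I_m) : ~~ injectiveb g -> \det (vcols g) = 0.
Proof.
case/injectivePn => j1 [j2 j12 gj12]; rewrite -det_tr.
by apply: (determinant_alternate j12) => k; rewrite !mxE gj12.
Qed.

Lemma det_vcols_sqr (g : 'I_n -> 'I_m) : injective g ->
  \det (vcols g) ^+ 2 = dI v (g @: [set: 'I_n])%SET.
Proof.
move=> g_inj; set I := (g @: _)%SET.
have sizeI : size (enum I) == n.
  by rewrite -cardE card_imset // cardsT card_ord.
pose t := Tuple sizeI.
have /tuple_permP[s gE] : perm_eq (map g (enum 'I_n)) t.
  apply: uniq_perm => [|/=|i]; first by rewrite map_inj_uniq // enum_uniq.
    exact: enum_uniq.
  rewrite /= mem_enum; apply/mapP/imsetP => -[j _ ->];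
    by exists j; rewrite ?mem_enum ?in_setT.
have -> : g = tnth t \o s.
  apply/funext => j; move: gE; rewrite /= -val_ord_tuple => /eq_in_map; apply.
  by rewrite val_ord_tuple mem_enum.
rewrite vcols_perm det_col_perm exprMn sqrr_sign mul1r /dI.
congr (\det _ ^+ 2); apply/matrixP => k j; rewrite !mxE.
have j_lt : (j < size (enum I))%N by rewrite (eqP sizeI).
rewrite (nth_map (tnth t j)) // (tnth_nth (tnth t j)).
by congr (v _ k 0); apply: set_nth_default.
Qed.

Lemma sum_tensE (l : 'I_m -> R) r k :
  (\sum_i l i *: tens (v i)) r k = \sum_i l i * (v i r 0 * v i k 0).
Proof. by rewrite summxE; apply: eq_bigr => i _; rewrite !mxE big_ord1 !mxE. Qed.

Lemma det_sum_tens_expand (l : 'I_m -> R) :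
  \det (\sum_i l i *: tens (v i)) =
  \sum_(f : {ffun 'I_n -> 'I_m})
    (\prod_r (l (f r) * v (f r) r 0)) * \det (vcols f).
Proof.
under [RHS]eq_bigr do rewrite -det_tr.
transitivity (\sum_(s : 'S_n) \sum_(f : {ffun 'I_n -> 'I_m})
   (-1) ^+ s * ((\prod_r (l (f r) * v (f r) r 0)) * \prod_r v (f r) (s r) 0)).
  apply: eq_bigr => s _; rewrite -mulr_sumr; congr (_ * _).
  under eq_bigr do rewrite sum_tensE.
  rewrite bigA_distr_bigA; apply: eq_bigr => f _.
  by rewrite -big_split; apply: eq_bigr => r _; rewrite !mulrA.
rewrite exchange_big; apply: eq_bigr => f _; rewrite mulr_sumr.
apply: eq_bigr => s _; rewrite mulrCA; congr (_ * (_ * _)).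
by apply: eq_bigr => r _; rewrite !mxE.
Qed.

(* Averaging [det_sum_tens_expand] over the reorderings [f \o s] of the columns turns
   the coefficient of [\det (vcols f)] into [\det (vcols f)] itself. *)
Lemma det_sum_tens_sym (l : 'I_m -> R) :
  n`!%:R * \det (\sum_i l i *: tens (v i)) =
  \sum_(f : {ffun 'I_n -> 'I_m}) (\prod_r l (f r)) * \det (vcols f) ^+ 2.
Proof.
have compK (s : 'S_n) : injective (fun f : {ffun 'I_n -> 'I_m} => [ffun r => f (s r)]).
  move=> f g /ffunP fg; apply/ffunP => r.
  by have := fg (s^-1 r)%g; rewrite !ffunE permKV.
have detE (s : 'S_n) : \det (\sum_i l i *: tens (v i)) =
    \sum_(f : {ffun 'I_n -> 'I_m})
      (\prod_r (l (f (s r)) * v (f (s r)) r 0)) * ((-1) ^+ s * \det (vcols f)).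
  rewrite det_sum_tens_expand (reindex_inj (compK s)); apply: eq_bigr => f _.
  have -> : vcols [ffun r => f (s r)] = vcols (f \o s).
    by apply/matrixP => i j; rewrite !mxE ffunE.
  rewrite vcols_perm det_col_perm; congr (_ * _).
  by apply: eq_bigr => r _; rewrite ffunE.
have -> : n`!%:R * \det (\sum_i l i *: tens (v i)) =
    \sum_(s : 'S_n) \det (\sum_i l i *: tens (v i)).
  by rewrite sumr_const card_Sn mulr_natl.
under eq_bigr => s _ do rewrite (detE s).
rewrite exchange_big; apply: eq_bigr => f _.
transitivity (\det (vcols f) *
  \sum_(s : 'S_n) (-1) ^+ s * \prod_r (l (f (s r)) * v (f (s r)) r 0)).
  by rewrite mulr_sumr; apply: eq_bigr => s _; rewrite mulrCA mulrA [_ * \det _]mulrC.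
rewrite [in RHS]expr2 mulrCA; congr (_ * _).
rewrite /(\det (vcols f)) mulr_sumr; apply: eq_bigr => s _.
rewrite big_split /= [\prod_r l (f r)](reindex_inj (@perm_inj _ s)) /=.
by rewrite mulrCA; congr (_ * (_ * _)); apply: eq_bigr => r _; rewrite mxE.
Qed.

Lemma det_sum_tens (l : 'I_m -> R) :
  \det (\sum_i l i *: tens (v i)) =
  \sum_(I : {set 'I_m} | #|I| == n) dI v I * \prod_(i in I) l i.
Proof.
have nfact_neq0 : n`!%:R != 0 :> R by rewrite pnatr_eq0 -lt0n fact_gt0.
apply: (mulfI nfact_neq0); rewrite det_sum_tens_sym mulr_sumr [RHS]big_mkcond /=.
rewrite (partition_big (fun f : {ffun 'I_n -> 'I_m} => f @: [set: 'I_n])%SET predT) //=.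
apply: eq_bigr => I _.
transitivity (\sum_(f : {ffun 'I_n -> 'I_m} | (f @: [set: 'I_n])%SET == I)
    if injectiveb f then dI v I * \prod_(i in I) l i else 0).
  apply: eq_bigr => f /eqP fI; case: injectiveP => [f_inj | /injectiveP f_ninj].
    rewrite det_vcols_sqr // fI mulrC -fI big_imset /=; last by move=> ? ? _ _; apply: f_inj.
    by congr (_ * _); apply: eq_bigl => r; rewrite inE.
  by rewrite det_vcols_noninj // expr0n mulr0.
rewrite -big_mkcondr /=.
rewrite (eq_bigl (mem [set f : {ffun 'I_n -> 'I_m} |
                        injectiveb f && ((f @: [set: 'I_n])%SET == I)]%SET)); last first.
  by move=> f; rewrite !inE andbC.
rewrite sumr_const card_inj_ffuns_onto card_ord.
by case: eqP => _; rewrite ?mul1n ?mul0n ?mulr0 // mulr_natl.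
Qed.

End CauchyBinet.

Lemma expR_convex (R : realType) (t a b : R) : 0 <= t -> t <= 1 ->
  expR (t * a + (1 - t) * b) <= t * expR a + (1 - t) * expR b.
Proof. by move=> t0 t1; have := convex_expR (Itv01 t0 t1) a b. Qed.

Lemma le0_of_quadratic_lower (R : realFieldType) (A B : R) :
  (forall t, 0 < t -> t <= 1 -> 2 * t * A <= t ^+ 2 * B) -> A <= 0.
Proof.
move=> quad; rewrite leNgt; apply/negP => A_gt0.
have AB_gt0 : 0 < A + `|B| by rewrite ltr_wpDr.
set t := A / (A + `|B|).
have t_gt0 : 0 < t by rewrite divr_gt0.
have t_le1 : t <= 1 by rewrite ler_pdivrMr // mul1r lerDl.
have tB_le : t * `|B| <= A.
  by rewrite mulrAC ler_pdivrMr // ler_pM2l //; have := normr_ge0 B; lra.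
have := quad t t_gt0 t_le1; have := ler_norm B; nra.
Qed.

Import numFieldNormedType.Exports.

Lemma continuous_sum (R : realType) (T : topologicalType) (I : Type) (r : seq I)
    (P : pred I) (F : I -> T -> R) :
  (forall i, P i -> continuous (F i)) ->
  continuous (fun x => \sum_(i <- r | P i) F i x).
Proof.
move=> F_cont; elim: r => [|i r IHr].
  by under eq_fun do rewrite big_nil; exact: cst_continuous.
case Pi: (P i); under eq_fun do rewrite big_cons Pi; last exact: IHr.
by move=> x; apply: continuousD; [exact: F_cont | exact: IHr].
Qed.

Section DotProduct.
Variables (R : realType) (m : nat).
Implicit Types (x y : 'rV[R]_m).

Lemma dotmC y x : dotm y x = dotm x y.
Proof. by apply: eq_bigr => i _; rewrite mulrC. Qed.

Lemma dotmDr y x1 x2 : dotm y (x1 + x2) = dotm y x1 + dotm y x2.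
Proof. by rewrite /dotm -big_split; apply: eq_bigr => i _; rewrite mxE mulrDr. Qed.

Lemma dotmZr y a x : dotm y (a *: x) = a * dotm y x.
Proof. by rewrite /dotm mulr_sumr; apply: eq_bigr => i _; rewrite mxE mulrCA. Qed.

Lemma dotmNr y x : dotm y (- x) = - dotm y x.
Proof. by rewrite -scaleN1r dotmZr mulN1r. Qed.

Lemma dotmDl y1 y2 x : dotm (y1 + y2) x = dotm y1 x + dotm y2 x.
Proof. by rewrite !(dotmC _ x) dotmDr. Qed.

Lemma dotmZl a y x : dotm (a *: y) x = a * dotm y x.
Proof. by rewrite !(dotmC _ x) dotmZr. Qed.

Lemma dotmBl y1 y2 x : dotm (y1 - y2) x = dotm y1 x - dotm y2 x.
Proof. by rewrite dotmDl -scaleN1r dotmZl mulN1r. Qed.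

Lemma dotm_suml (T : finType) (w : T -> R) (y : T -> 'rV[R]_m) x :
  dotm (\sum_k w k *: y k) x = \sum_k w k * dotm (y k) x.
Proof.
rewrite /dotm; under eq_bigr do rewrite summxE mulr_suml.
rewrite exchange_big; apply: eq_bigr => k _; rewrite mulr_sumr.
by apply: eq_bigr => i _; rewrite !mxE mulrA.
Qed.

Lemma dotm_continuous y : continuous (dotm y).
Proof.
apply: continuous_sum => i _ x.
by apply: continuousM; [exact: cst_continuous | exact: coord_continuous].
Qed.

Lemma dotm_self_ge0 x : 0 <= dotm x x.
Proof. by apply: sumr_ge0 => i _; rewrite -expr2 sqr_ge0. Qed.

Lemma dotm_self_eq0 x : (dotm x x == 0) = (x == 0).
Proof.
apply/idP/eqP => [/eqP xx0 | ->]; last by rewrite /dotm big1 // => i _; rewrite mxE mul0r.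
apply/rowP => i; rewrite mxE; apply/eqP; rewrite -sqrf_eq0 expr2; apply/eqP.
by apply: (psumr_eq0P _ xx0) => // j _; rewrite -expr2 sqr_ge0.
Qed.

Lemma dotm_sqrBZ x y t :
  dotm (x - t *: y) (x - t *: y) = dotm x x - 2 * t * dotm x y + t ^+ 2 * dotm y y.
Proof.
rewrite /dotm mulr_sumr -sumrB mulr_sumr -big_split /=.
by apply: eq_bigr => i _; rewrite !mxE; ring.
Qed.

End DotProduct.

Section ExpSum.
Variables (R : realType) (m : nat) (T : finType) (S : pred T).
Variables (a : T -> R) (p : T -> 'rV[R]_m).
Hypothesis a_gt0 : forall k, S k -> 0 < a k.
Hypothesis S_neq0 : exists k, S k.

Definition expsum (x : 'rV[R]_m) : R := \sum_(k | S k) a k * expR (dotm (p k) x).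

Definition in_hull (y : 'rV[R]_m) : Prop :=
  exists w : T -> R, [/\ forall k, 0 <= w k, forall k, ~~ S k -> w k = 0,
                         \sum_k w k = 1 & y = \sum_k w k *: p k].

Definition expsum_conj (y : 'rV[R]_m) : \bar R :=
  ereal_sup (range (fun x => (dotm y x - ln (expsum x))%:E)).

Lemma expsum_ge k x : S k -> a k * expR (dotm (p k) x) <= expsum x.
Proof.
move=> Sk; rewrite /expsum (bigD1 k) //= lerDl sumr_ge0 // => l /andP[Sl _].
by rewrite mulr_ge0 ?expR_ge0 // ltW ?a_gt0.
Qed.

Lemma expsum_gt0 x : 0 < expsum x.
Proof.
have [k Sk] := S_neq0.
by apply: lt_le_trans (expsum_ge x Sk); rewrite mulr_gt0 ?expR_gt0 ?a_gt0.
Qed.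

Lemma ln_expsum_ge k x : S k -> ln (a k) + dotm (p k) x <= ln (expsum x).
Proof.
move=> Sk; rewrite -[dotm _ x]expRK -lnM ?posrE ?expR_gt0 ?a_gt0 //.
by rewrite ler_ln ?posrE ?mulr_gt0 ?expR_gt0 ?expsum_gt0 ?a_gt0 // expsum_ge.
Qed.

Lemma expsum_continuous : continuous expsum.
Proof.
apply: continuous_sum => k _ x.
have expR_dotm_cont : {for x, continuous (fun x => expR (dotm (p k) x))}.
  have dotm_cont : {for x, continuous (dotm (p k))} by apply: dotm_continuous.
  have expR_cont : {for dotm (p k) x, continuous (@expR R)} by apply: continuous_expR.
  exact: continuous_comp dotm_cont expR_cont.
exact: continuousM (@cst_continuous _ R (a k) x) expR_dotm_cont.
Qed.

(* Hoelder's inequality for the exponential sum, summand by summand from the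
   convexity of [expR] after normalising by [expsum x] and [expsum y]. *)
Lemma ln_expsum_convex x y t : 0 <= t -> t <= 1 ->
  ln (expsum (t *: x + (1 - t) *: y)) <=
  t * ln (expsum x) + (1 - t) * ln (expsum y).
Proof.
move=> t0 t1; set E := expR (t * ln (expsum x) + (1 - t) * ln (expsum y)).
rewrite -[leRHS]expRK ler_ln ?posrE ?expsum_gt0 ?expR_gt0 //.
have Ex_gt0 := expsum_gt0 x; have Ey_gt0 := expsum_gt0 y.
apply: (@le_trans _ _ (\sum_(k | S k) (E * t / expsum x * (a k * expR (dotm (p k) x)) +
    E * (1 - t) / expsum y * (a k * expR (dotm (p k) y))))).
  apply: ler_sum => k Sk; rewrite dotmDr !dotmZr.
  set u := dotm (p k) x; set w := dotm (p k) y.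
  have -> : expR (t * u + (1 - t) * w) =
      E * expR (t * (u - ln (expsum x)) + (1 - t) * (w - ln (expsum y))).
    by rewrite -expRD; congr expR; ring.
  have := expR_convex (u - ln (expsum x)) (w - ln (expsum y)) t0 t1.
  rewrite !expRB !lnK ?posrE // => conv.
  rewrite [leRHS](_ : _ = a k * (E * (t * (expR u / expsum x) +
                                      (1 - t) * (expR w / expsum y)))); last by ring.
  by rewrite ler_wpM2l ?ler_wpM2l ?expR_ge0 // ltW ?a_gt0.
rewrite big_split /= -!mulr_sumr -!/(expsum _).
by rewrite -!mulrA !mulVf ?gt_eqF // !mulr1 -mulrDr addrC subrK mulr1.
Qed.

Lemma in_hull_dotm_le y x r : in_hull y ->
  (forall k, S k -> dotm (p k) x <= r) -> dotm y x <= r.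
Proof.
case=> w [w_ge0 w_out w_sum ->] px_le; rewrite dotm_suml.
rewrite -[r]mul1r -w_sum mulr_suml; apply: ler_sum => k _.
by have [Sk | /w_out ->] := boolP (S k); rewrite ?mul0r // ler_wpM2l ?px_le.
Qed.

Lemma expsum_conj_lt_pinfty y : in_hull y -> (expsum_conj y < +oo)%E.
Proof.
case=> w [w_ge0 w_out w_sum y_def].
apply: (@le_lt_trans _ _ (- \sum_k w k * ln (a k))%:E); last exact: ltry.
apply: ge_ereal_sup => _ [x _ <-]; rewrite lee_fin y_def dotm_suml.
rewrite -[ln (expsum x)]mul1r -w_sum mulr_suml -sumrB -sumrN.
apply: ler_sum => k _; rewrite -mulrBr -mulrN.
have [Sk | /w_out ->] := boolP (S k); last by rewrite !mul0r.
by rewrite ler_wpM2l //; have := ln_expsum_ge x Sk; lra.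
Qed.

Lemma in_hull_dotm_eq y x r : in_hull y ->
  (forall k, S k -> dotm (p k) x = r) -> dotm y x = r.
Proof.
move=> y_hull px_eq; apply/eqP; rewrite eq_le.
rewrite (in_hull_dotm_le y_hull) => [|k /px_eq ->] //=.
rewrite -lerN2 -dotmNr (in_hull_dotm_le y_hull) // => k /px_eq <-.
by rewrite dotmNr.
Qed.

Let N := #|T|.
Let ev (j : 'I_N) : T := enum_val j.

Section Separation.
Variable y : 'rV[R]_m.
Let P : 'M[R]_(N, m) := \matrix_(j, i) p (ev j) 0 i.
Let vertex (k : T) : 'rV[R]_N := delta_mx 0 (enum_rank k).
Let face (j : 'I_N) : set R := if S (ev j) then [set r | 0 <= r] else [set 0].
Let simplex : set 'rV[R]_N :=
  [set w | (forall j, face j (w 0 j)) /\ \sum_j w 0 j = 1].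
Let sqdist (w : 'rV[R]_N) : R := dotm (y - w *m P) (y - w *m P).

Let simplex_ge0 w j : simplex w -> 0 <= w 0 j.
Proof. by case=> /(_ j); rewrite /face; case: ifP => _ // ->. Qed.

Let simplex_compact : compact simplex.
Proof.
have simplex_closed : closed simplex.
  have -> : simplex = \bigcap_(j in setT) ((fun w : 'rV[R]_N => w 0 j) @^-1` face j) `&`
                     ((fun w : 'rV[R]_N => \sum_j w 0 j) @^-1` [set 1]).
    apply/seteqP; split => w [w_face w_sum]; split => // j; first by move=> _; apply: w_face.
    exact: w_face.
  apply: closedI.
    apply: closed_bigI => j _; apply: preimage_closed; first by move=> w _; exact: coord_continuous.
    by rewrite /face; case: ifP => _; [exact: closed_ge | exact: closed_eq].
  apply: preimage_closed; last exact: closed_eq.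
  by move=> w _; apply: continuous_sum => j _; exact: coord_continuous.
have box_compact : compact [set w : 'rV[R]_N | forall j, w 0 j \in `[(0 : R), 1]].
  by apply: (@rV_compact _ _ (fun=> `[(0 : R), 1]%classic)) => _; exact: segment_compact.
apply: subclosed_compact simplex_closed box_compact _ => w w_simplex j /=.
rewrite in_itv /= simplex_ge0 //; have [_ <-] := w_simplex.
by rewrite (bigD1 j) //= lerDl sumr_ge0 // => l _; apply: simplex_ge0.
Qed.

Let sqdist_continuous : continuous sqdist.
Proof.
have coord_cont i : continuous (fun w : 'rV[R]_N => (y - w *m P) 0 i).
  under eq_fun do rewrite !mxE.
  move=> w; apply: continuousB; first exact: cst_continuous.
  apply: continuous_sum => j _ {}w; apply: continuousM; first exact: coord_continuous.
  exact: cst_continuous.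
by apply: continuous_sum => i _ w; apply: continuousM; apply: coord_cont.
Qed.

Let vertexP k : S k -> simplex (vertex k).
Proof.
move=> Sk; split=> [j|]; last first.
  by rewrite (bigD1 (enum_rank k)) //= big1 => [|j /negPf]; rewrite mxE ?eqxx ?addr0 // => ->.
rewrite /face mxE eqxx /=; have [->|_] := eqVneq j (enum_rank k).
  by rewrite /ev enum_rankK Sk /=.
by case: (S (ev j)); rewrite /= ?lexx.
Qed.

Let vertex_mulmx k : vertex k *m P = p k.
Proof. by rewrite -rowE; apply/rowP => i; rewrite !mxE /ev enum_rankK. Qed.

Let in_hull_mulmx w : simplex w -> in_hull (w *m P).
Proof.
move=> w_simplex; exists (fun k => w 0 (enum_rank k)); split.
- by move=> k; apply: simplex_ge0.
- move=> k Sk; case: w_simplex => /(_ (enum_rank k)).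
  by rewrite /face /ev enum_rankK (negbTE Sk).
- have [_ <-] := w_simplex; rewrite (reindex ev) /=; last exact/onW_bij/enum_val_bij.
  by apply: eq_bigr => j _; rewrite /ev enum_valK.
rewrite mulmx_sum_row (reindex ev) /=; last exact/onW_bij/enum_val_bij.
by apply: eq_bigr => j _; rewrite /ev enum_valK; congr (_ *: _); apply/rowP => i; rewrite !mxE.
Qed.

Let simplex_convex w1 w2 t : simplex w1 -> simplex w2 -> 0 <= t -> t <= 1 ->
  simplex (w1 + t *: (w2 - w1)).
Proof.
move=> [w1_face w1_sum] [w2_face w2_sum] t0 t1; split=> [j|].
  have := w1_face j; have := w2_face j; rewrite /face !mxE.
  case: ifP => _ /=; last by move=> -> ->; rewrite subrr mulr0 addr0.
  by move=> w2j w1j; nra.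
under eq_bigr do rewrite !mxE.
by rewrite big_split /= -mulr_sumr sumrB w1_sum w2_sum subrr mulr0 addr0.
Qed.

Lemma hull_separation : ~ in_hull y ->
  exists z d, 0 < d /\ forall k, S k -> dotm (p k) z + d <= dotm y z.
Proof.
move=> y_out; have [k0 Sk0] := S_neq0.
have [ws] := EVT_min_rV (ex_intro _ _ (vertexP Sk0)) simplex_compact
  (continuous_subspaceT sqdist_continuous).
rewrite inE => ws_simplex ws_min.
set q := ws *m P; set z := y - q.
exists z, (dotm z z); split.
  rewrite lt_def dotm_self_ge0 andbT dotm_self_eq0 subr_eq0.
  by apply/eqP => y_q; apply: y_out; rewrite y_q; exact: in_hull_mulmx.
move=> k Sk.
(* [q] is the point of the hull nearest to [y], so moving from [q] towards
   [p k] does not decrease the distance to [y] *)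
have z_dir_le0 : dotm z (p k - q) <= 0.
  apply: (@le0_of_quadratic_lower _ _ (dotm (p k - q) (p k - q))) => t t0 t1.
  have wt_simplex := simplex_convex ws_simplex (vertexP Sk) (ltW t0) t1.
  have := ws_min _ (mem_set wt_simplex).
  rewrite /sqdist mulmxDl -scalemxAl mulmxBl vertex_mulmx -/q -/z.
  rewrite opprD addrA -/z dotm_sqrBZ; lra.
have -> : dotm y z = dotm q z + dotm z z by rewrite -dotmDl /z [q + _]addrC subrK.
by move: z_dir_le0; rewrite dotmC dotmBl; lra.
Qed.

End Separation.

Lemma expsum_conj_pinfty y z d : 0 < d ->
  (forall k, S k -> dotm (p k) z + d <= dotm y z) -> ~ (expsum_conj y < +oo)%E.
Proof.
move=> d_gt0 z_sep; have [k0 Sk0] := S_neq0.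
have conj_ge x : ((dotm y x - ln (expsum x))%:E <= expsum_conj y)%E.
  by apply: ereal_sup_ubound; exists x.
case: (expsum_conj y) conj_ge => [r| |] // conj_ge _; last first.
  by have := conj_ge 0; rewrite leeNy_eq.
set A := \sum_(k | S k) a k.
have A_gt0 : 0 < A.
  rewrite /A (bigD1 k0) //= ltr_pwDl ?a_gt0 // sumr_ge0 // => k /andP[Sk _].
  exact/ltW/a_gt0.
set t := (`|r| + `|ln A| + 1) / d.
have t_ge0 : 0 <= t by rewrite divr_ge0 ?ltW // addr_ge0.
have td : t * d = `|r| + `|ln A| + 1 by rewrite divfK ?gt_eqF.
have expsum_le : expsum (t *: z) <= A * expR (t * (dotm y z - d)).
  rewrite /expsum /A mulr_suml; apply: ler_sum => k Sk.
  apply: ler_wpM2l; first exact/ltW/a_gt0.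
  by rewrite ler_expR dotmZr ler_wpM2l // lerBrDr z_sep.
have : ln (expsum (t *: z)) <= ln A + t * (dotm y z - d).
  rewrite -[t * _]expRK -lnM ?posrE ?expR_gt0 //.
  by rewrite ler_ln ?posrE ?mulr_gt0 ?expR_gt0 ?expsum_gt0.
have := conj_ge (t *: z); rewrite lee_fin dotmZr.
have := ler_norm r; have := ler_norm (ln A); nra.
Qed.

Lemma expsum_conj_lt_pinftyP y : (expsum_conj y < +oo)%E <-> in_hull y.
Proof.
split=> [conj_fin | /expsum_conj_lt_pinfty //].
apply: contrapT => /hull_separation[z [d [d_gt0 z_sep]]].
exact: expsum_conj_pinfty d_gt0 z_sep conj_fin.
Qed.

Section Attainment.
Variables (c u : 'rV[R]_m) (d : R).
Hypothesis d_gt0 : 0 < d.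
Hypothesis c_spread : forall k l, S k -> S l -> in_hull (c + d *: (p k - p l)).
Hypothesis p_u : forall k, S k -> dotm (p k) u = 1.

Let obj x := dotm c x - ln (expsum x).
Let ln_a_norm := \sum_(k | S k) `|ln (a k)|.

Let c_in_hull : in_hull c.
Proof. by have [k Sk] := S_neq0; have := c_spread Sk Sk; rewrite subrr scaler0 addr0. Qed.

Let obj_shift x s : obj (x + s *: u) = obj x.
Proof.
have c_u : dotm c u = 1 by apply: in_hull_dotm_eq c_in_hull _.
have expsum_shift : expsum (x + s *: u) = expR s * expsum x.
  rewrite /expsum mulr_sumr; apply: eq_bigr => k Sk.
  by rewrite dotmDr dotmZr p_u // mulr1 expRD mulrA mulrC.
rewrite /obj expsum_shift lnM ?posrE ?expR_gt0 ?expsum_gt0 // expRK.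
by rewrite dotmDr dotmZr c_u; ring.
Qed.

Let obj_eq x x' : (forall k, S k -> dotm (p k) x = dotm (p k) x') -> obj x = obj x'.
Proof.
move=> px_eq; rewrite /obj; have c_eq : dotm c (x - x') = 0.
  by apply: in_hull_dotm_eq c_in_hull _ => k Sk; rewrite dotmDr dotmNr px_eq ?subrr.
have -> : expsum x = expsum x' by apply: eq_bigr => k Sk; rewrite px_eq.
by move/eqP: c_eq; rewrite dotmDr dotmNr subr_eq0 => /eqP ->.
Qed.

Let dotm_le_ln_expsum x k : S k -> dotm (p k) x <= ln (expsum x) + ln_a_norm.
Proof.
move=> Sk; have := ln_expsum_ge x Sk.
have : `|ln (a k)| <= ln_a_norm by rewrite /ln_a_norm (bigD1 k) //= lerDl sumr_ge0.
have := ler_norm (- ln (a k)); rewrite normrN; lra.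
Qed.

Let dotm_spread x k l : S k -> S l ->
  d * (dotm (p k) x - dotm (p l) x) <= ln_a_norm - obj x.
Proof.
move=> Sk Sl; have := in_hull_dotm_le (c_spread Sk Sl) (dotm_le_ln_expsum x).
by rewrite dotmDl dotmZl dotmBl /obj; lra.
Qed.

Let Q : 'M[R]_(m, N) := \matrix_(i, j) (if S (ev j) then p (ev j) 0 i else 0).
Let rad := `|(ln_a_norm - obj 0) / d| * \sum_j \sum_i `|pinvmx Q j i|.

Let mulmxQ x j : (x *m Q) 0 j = if S (ev j) then dotm (p (ev j)) x else 0.
Proof.
rewrite mxE; under eq_bigr do rewrite mxE.
case: ifP => _; last by rewrite big1 // => i _; rewrite mulr0.
by apply: eq_bigr => i _; rewrite mulrC.
Qed.

(* Shifting along [u] normalises one coordinate [dotm (p k0) x] to [0]; the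
   spread bound then bounds all [dotm (p k) x], and [pinvmx Q] recovers a
   bounded [x] with these values. *)
Let obj_bounded_witness x : obj 0 <= obj x ->
  exists2 x' : 'rV[R]_m, forall i, `|x' 0 i| <= rad & obj x' = obj x.
Proof.
move=> obj_ge; have [k0 Sk0] := S_neq0.
set x1 := x + (- dotm (p k0) x) *: u.
have px1 k : S k -> dotm (p k) x1 = dotm (p k) x - dotm (p k0) x.
  by move=> Sk; rewrite dotmDr dotmZr p_u // mulr1.
have px1_le k : S k -> `|dotm (p k) x1| <= `|(ln_a_norm - obj 0) / d|.
  move=> Sk; apply: le_trans _ (ler_norm _); rewrite px1 // ler_norml lerNl.
  have := dotm_spread x Sk Sk0; have := dotm_spread x Sk0 Sk.
  by rewrite !ler_pdivlMr // => ? ?; apply/andP; split; nra.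
set al := x1 *m Q.
have al_le j : `|al 0 j| <= `|(ln_a_norm - obj 0) / d|.
  by rewrite /al mulmxQ; case: ifP => [/px1_le //|_]; rewrite normr0.
exists (al *m pinvmx Q) => [i|].
  rewrite mxE; apply: le_trans (ler_norm_sum _ _ _) _.
  rewrite /rad mulr_sumr; apply: ler_sum => j _; rewrite normrM.
  apply: le_trans (ler_wpM2r (normr_ge0 _) (al_le j)) _; apply: ler_wpM2l => //.
  by rewrite (bigD1 i) //= lerDl sumr_ge0.
rewrite -(obj_shift x (- dotm (p k0) x)) -/x1; apply: obj_eq => k Sk.
have := congr1 (fun y : 'rV[R]_N => y 0 (enum_rank k)) (mulmxKpV (submxMl x1 Q)).
by rewrite /= -/al !mulmxQ /ev enum_rankK Sk.
Qed.

Lemma expsum_conj_attained : exists x, expsum_conj c = (obj x)%:E.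
Proof.
set box := [set x : 'rV[R]_m | forall i, x 0 i \in `[(- rad), rad]].
have box_compact : compact box.
  by apply: (@rV_compact _ _ (fun=> `[(- rad), rad]%classic)) => _; exact: segment_compact.
have rad_ge0 : 0 <= rad by rewrite mulr_ge0 // sumr_ge0 // => j _; rewrite sumr_ge0.
have box0 : box 0 by move=> i; rewrite mxE in_itv /= oppr_le0 rad_ge0.
have obj_cont : continuous obj.
  move=> x; apply: continuousB; first exact: dotm_continuous.
  have ln_cont : {for expsum x, continuous (@ln R)} by apply/continuous_ln/expsum_gt0.
  have expsum_cont : {for x, continuous expsum} by apply: expsum_continuous.
  exact: continuous_comp expsum_cont ln_cont.
have [xs _ xs_max] := EVT_max_rV (ex_intro _ _ box0) box_compact
  (continuous_subspaceT obj_cont).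
have obj_le x : obj x <= obj xs.
  have [obj_ge|/ltW obj_lt] := leP (obj 0) (obj x); last first.
    by apply: le_trans obj_lt (xs_max _ (mem_set box0)).
  have [x' x'_box <-] := obj_bounded_witness obj_ge; apply: xs_max; rewrite inE => i.
  by rewrite in_itv /= -ler_norml.
exists xs; apply/eqP; rewrite eq_le; apply/andP; split.
  by apply: ge_ereal_sup => _ [x _ <-]; rewrite lee_fin obj_le.
by apply: ereal_sup_ubound; exists xs.
Qed.

End Attainment.

End ExpSum.

Section SupInf.
Variables (R : realType) (T : Type) (G : T -> R) (x0 : T).

Let supG := ereal_sup (range (fun x => (G x)%:E)).
Let infE := inf (range (fun x => expR (- G x))).

Let supG_ge x : ((G x)%:E <= supG)%E.
Proof. by apply: ereal_sup_ubound; exists x. Qed.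

Let infE_le x : infE <= expR (- G x).
Proof. by apply: inf_lbound; [exists 0 => _ [y _ <-]; exact: expR_ge0 | exists x]. Qed.

Let infE_ge0 : 0 <= infE.
Proof. by apply: lb_le_inf; [exists (expR (- G x0)), x0 | move=> _ [y _ <-]; exact: expR_ge0]. Qed.

Let infE_lt r : (r%:E < supG)%E -> infE < expR (- r).
Proof.
move=> /ereal_sup_gt[_ [x _ <-]]; rewrite lte_fin => r_lt.
by apply: le_lt_trans (infE_le x) _; rewrite ltr_expR ltrN2.
Qed.

Let supG_le_lnN_infE : 0 < infE -> (supG <= (- ln infE)%:E)%E.
Proof.
move=> infE_gt0; rewrite leNgt; apply/negP => /infE_lt.
by rewrite opprK lnK ?posrE // ltxx.
Qed.

Lemma inf_expRN_sup : infE%:E = expeR (- supG)%E.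
Proof.
case supG_E : supG => [r| |] /=; last by have := supG_ge x0; rewrite supG_E leeNy_eq.
- congr (_%:E); apply/eqP; rewrite eq_le; apply/andP; split.
    rewrite leNgt; apply/negP => lt_infE.
    have infE_gt0 : 0 < infE by exact: lt_trans (expR_gt0 _) lt_infE.
    have := supG_le_lnN_infE infE_gt0; rewrite supG_E lee_fin lerNr.
    by rewrite -[- r]expRK ler_ln ?posrE ?expR_gt0 // leNgt lt_infE.
  apply: lb_le_inf; first by exists (expR (- G x0)), x0.
  move=> _ [x _ <-]; rewrite ler_expR lerN2 -lee_fin -supG_E; exact: supG_ge.
- congr (_%:E); apply/eqP; rewrite eq_le infE_ge0 andbT leNgt; apply/negP => infE_gt0.
  by have := supG_le_lnN_infE infE_gt0; rewrite supG_E leye_eq.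
Qed.

Lemma inf_expRN_gt0 : 0 < infE <-> (supG < +oo)%E.
Proof.
have := inf_expRN_sup; case: supG => [r| |] //= [->].
- by split=> _; [exact: ltry | exact: expR_gt0].
- by rewrite !ltxx.
Qed.

Lemma inf_expRN_attained :
  (exists x, expR (- G x) = infE) <-> (exists x, supG = (G x)%:E).
Proof.
split=> -[x Gx]; exists x.
  apply/eqP; rewrite eq_le supG_ge andbT; apply: ge_ereal_sup => _ [y _ <-].
  by rewrite lee_fin -lerN2 -ler_expR Gx infE_le.
by have := inf_expRN_sup; rewrite Gx /= => -[].
Qed.

End SupInf.

Lemma sum_delta (R : nzSemiRingType) (T : finType) (k : T) :
  \sum_j (j == k)%:R = 1 :> R.
Proof. by rewrite (bigD1 k) //= eqxx big1 ?addr0 // => j /negPf ->. Qed.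

Lemma sum_delta_scale (R : nzRingType) (V : lmodType R) (T : finType) (F : T -> V) (k : T) :
  \sum_j (j == k)%:R *: F j = F k.
Proof.
by rewrite (bigD1 k) //= eqxx scale1r big1 ?addr0 // => j /negPf ->; rewrite scale0r.
Qed.

Lemma row_free_mul_tr (R : realType) p q (A : 'M[R]_(p, q)) :
  row_free A -> row_free (A *m A^T).
Proof.
move=> A_free; rewrite -kermx_eq0; apply/rowV0P => x /sub_kermxP xAA0.
have xA_sqr0 : (x *m A) *m (x *m A)^T = 0.
  by rewrite trmx_mul !mulmxA -(mulmxA x) xAA0 !mul0mx.
have : dotm (x *m A) (x *m A) = 0.
  transitivity (((x *m A) *m (x *m A)^T) 0 0); last by rewrite xA_sqr0 mxE.
  by rewrite mxE /dotm; apply: eq_bigr => i _; rewrite !mxE.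
by move/eqP; rewrite dotm_self_eq0 mulmx_free_eq0 // => /eqP.
Qed.

Section GramDeterminant.
Variables (R : realType) (n m : nat) (v : 'I_m -> 'cV[R]_n).
Implicit Types (x y c : 'rV[R]_m).

Lemma dotm_ind (I : {set 'I_m}) (x : 'rV[R]_m) : dotm (ind R I) x = \sum_(i in I) x 0 i.
Proof.
rewrite /dotm [RHS]big_mkcond; apply: eq_bigr => i _; rewrite mxE.
by case: (i \in I); rewrite ?mul1r ?mul0r.
Qed.

Lemma dI_gt0 I : admissible v I -> 0 < dI v I.
Proof. by case/andP=> _ dI_neq0; rewrite lt_def dI_neq0 sqr_ge0. Qed.

Lemma det_sum_tens_expR x :
  \det (\sum_i expR (x 0 i) *: tens (v i)) = expsum (admissible v) (dI v) (@ind R m) x.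
Proof.
rewrite det_sum_tens /expsum [LHS]big_mkcond [RHS]big_mkcond; apply: eq_bigr => I _.
rewrite /admissible dotm_ind expR_sum; case: (#|I| == n) => //=.
by case: eqP => [->|]; rewrite ?mul0r.
Qed.

Lemma phiE x : phi v x = ln (expsum (admissible v) (dI v) (@ind R m) x).
Proof. by rewrite /phi det_sum_tens_expR. Qed.

Lemma phistarE y : phistar v y = expsum_conj (admissible v) (dI v) (@ind R m) y.
Proof. by rewrite /phistar; under eq_fun do rewrite phiE. Qed.

Hypothesis v_full : row_full (\matrix_i (v i)^T).

Lemma exists_admissible : exists I, admissible v I.
Proof.
set V := \matrix_i (v i)^T.
have : \det (V^T *m V) != 0.
  by rewrite -unitfE -unitmxE -row_free_unit -{2}[V]trmxK row_free_mul_tr // /row_free mxrank_tr.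
have -> : V^T *m V = \sum_i 1 *: tens (v i).
  by apply/matrixP => r k; rewrite sum_tensE !mxE; apply: eq_bigr => i _; rewrite !mxE mul1r.
move=> det_neq0; apply: contrapT => no_adm; move/eqP: det_neq0; apply.
rewrite det_sum_tens; apply: big1 => I cardI.
have dI0 : dI v I = 0.
  by apply: contrapT => dI_neq0; apply: no_adm; exists I; rewrite /admissible cardI; exact/eqP.
by rewrite dI0 mul0r.
Qed.

Lemma expsum_gram_gt0 x : 0 < expsum (admissible v) (dI v) (@ind R m) x.
Proof. exact: expsum_gt0 dI_gt0 exists_admissible x. Qed.

Lemma Dratio_expR c x :
  Dratio v c (\row_i expR (x 0 i)) = expR (- (dotm c x - phi v x)).
Proof.
rewrite /Dratio (eq_bigr (fun i => expR (x 0 i) *: tens (v i))); last by move=> i _; rewrite mxE.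
rewrite (eq_bigr (fun i => expR (c 0 i * x 0 i))); last first.
  by move=> i _; rewrite mxE /powR expR_eq0 expRK.
rewrite -expR_sum -/(dotm c x) phiE det_sum_tens_expR opprB expRB.
by rewrite lnK // posrE expsum_gram_gt0.
Qed.

Lemma phi_convex x y t : 0 <= t -> t <= 1 ->
  phi v (t *: x + (1 - t) *: y) <= t * phi v x + (1 - t) * phi v y.
Proof.
move=> t0 t1; rewrite !phiE.
exact: (ln_expsum_convex (@ind R m) dI_gt0 exists_admissible x y t0 t1).
Qed.

Lemma Dratio_ln c lam : posvec lam ->
  Dratio v c lam = expR (- (dotm c (\row_i ln (lam 0 i)) - phi v (\row_i ln (lam 0 i)))).
Proof.
move=> lam_pos; rewrite -Dratio_expR; congr Dratio.
by apply/rowP => i; rewrite !mxE lnK // posrE.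
Qed.

Lemma Dratio_range c : [set Dratio v c lam | lam in @posvec R m] =
  range (fun x => expR (- (dotm c x - phi v x))).
Proof.
apply/seteqP; split => _ [lam lam_pos <-].
  by exists (\row_i ln (lam 0 i)); rewrite ?Dratio_ln.
by exists (\row_i expR (lam 0 i)); [move=> i; rewrite mxE expR_gt0 | exact: Dratio_expR].
Qed.

Lemma Dc_expeR c : (Dc v c)%:E = expeR (- phistar v c)%E.
Proof. by rewrite /Dc Dratio_range; exact: inf_expRN_sup 0. Qed.

Lemma Dc_gt0 c : 0 < Dc v c <-> (phistar v c < +oo)%E.
Proof. by rewrite /Dc Dratio_range; exact: inf_expRN_gt0 0. Qed.

Lemma Dc_attainedP c :
  (exists lam, posvec lam /\ Dratio v c lam = Dc v c) <->
  (exists x, phistar v c = (dotm c x - phi v x)%:E).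
Proof.
rewrite -(inf_expRN_attained (fun x => dotm c x - phi v x) 0) /Dc Dratio_range.
split=> -[lam]; first by move=> [lam_pos <-]; exists (\row_i ln (lam 0 i)); rewrite Dratio_ln.
move=> <-; exists (\row_i expR (lam 0 i)); rewrite Dratio_expR.
by split=> // i; rewrite mxE expR_gt0.
Qed.

Lemma phistar_lt_pinftyP y : (phistar v y < +oo)%E <-> K v y.
Proof. by rewrite phistarE; exact: expsum_conj_lt_pinftyP dI_gt0 exists_admissible y. Qed.

Lemma relint_K_spread c : relint_K v c -> exists2 d, 0 < d &
  forall L J, admissible v L -> admissible v J -> K v (c + d *: (ind R L - ind R J)).
Proof.
move=> [[w [w_ge0 w_out w_sum c_def]] [e [e_gt0 e_ball]]].
have e2_gt0 : 0 < e / 2 by rewrite divr_gt0.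
exists (e / 2) => // L J adm_L adm_J; apply: e_ball.
  exists (fun I => w I + e / 2 * ((I == L)%:R - (I == J)%:R)); split.
  - move=> I I_out; have [IL | _] := eqVneq I L; first by move: I_out; rewrite IL adm_L.
    have [IJ | _] := eqVneq I J; first by move: I_out; rewrite IJ adm_J.
    by rewrite w_out // subrr mulr0 addr0.
  - by rewrite big_split /= w_sum -mulr_sumr sumrB !sum_delta subrr mulr0 addr0.
  - under eq_bigr do rewrite scalerDl -scalerA scalerBl.
    by rewrite big_split /= -scaler_sumr sumrB !sum_delta_scale c_def.
move=> i; rewrite !mxE addrAC subrr add0r normrM gtr0_norm //.
have delta_le1 : `|(i \in L)%:R - (i \in J)%:R| <= 1 :> R.
  by case: (i \in L); case: (i \in J); rewrite ?subrr ?subr0 ?sub0r ?normrN ?normr0 ?normr1.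
by apply: le_lt_trans (ler_wpM2l (ltW e2_gt0) delta_le1) _; rewrite mulr1; lra.
Qed.

Lemma phistar_attained c : (forall i, 0 < c 0 i) -> \sum_i c 0 i = n%:R ->
  relint_K v c -> exists x, phistar v c = (dotm c x - phi v x)%:E.
Proof.
move=> c_gt0 c_sum c_relint; have [n0 | n_gt0] := posnP n.
  (* the normalisation along [n%:R^-1 *: const_mx 1] below needs [n > 0];
     for [n = 0] the positivity of [c] forces [m = 0] *)
  have m0 : m = 0%N.
    case: (posnP m) => // m_gt0; have := c_sum; rewrite n0 (bigD1 (Ordinal m_gt0)) //=.
    by move/eqP; rewrite gt_eqF // ltr_pwDl ?c_gt0 // sumr_ge0 // => i _; exact/ltW.
  have x0 (x : 'rV[R]_m) : x = 0.
    by apply/rowP => i; exfalso; have := ltn_ord i; move: (nat_of_ord i) => k; rewrite m0.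
  exists 0; apply/eqP; rewrite eq_le; apply/andP; split; last by apply: ereal_sup_ubound; exists 0.
  by apply: ge_ereal_sup => _ [x _ <-]; rewrite (x0 x).
have [d d_gt0 c_spread] := relint_K_spread c_relint.
have ind_u I : admissible v I -> dotm (ind R I) (n%:R^-1 *: const_mx 1) = 1.
  move=> /andP[/eqP cardI _]; rewrite dotmZr dotm_ind.
  under eq_bigr do rewrite mxE.
  by rewrite sumr_const cardI mulVf // pnatr_eq0 -lt0n.
have [x conj_x] := expsum_conj_attained dI_gt0 exists_admissible d_gt0 c_spread ind_u.
by exists x; rewrite phistarE conj_x phiE.
Qed.

End GramDeterminant.

Theorem proposition6 (R : realType) (n m : nat) (v : 'I_m -> 'cV[R]_n)
  (c : 'rV[R]_m) :
  (forall i, v i != 0) ->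
  row_full (\matrix_(i < m) (v i)^T) ->
  (n <= m)%N ->
  (forall i, 0 < c 0 i) ->
  \sum_(i < m) c 0 i = n%:R ->
  ((* (1) *)
      (forall (x y : 'rV[R]_m) (t : R), 0 <= t -> t <= 1 ->
         phi v (t *: x + (1 - t) *: y) <= t * phi v x + (1 - t) * phi v y)) /\
      (* (2) *)
      (Dc v c)%:E = expeR (- phistar v c)%E /\
      (* (3) *)
      (0 < Dc v c <-> (phistar v c < +oo)%E) /\
      (* (4) *)
      ((exists lam, posvec lam /\ Dratio v c lam = Dc v c) <->
       (exists x, phistar v c = (dotm c x - phi v x)%:E)) /\
      (* (5) *)
      (forall y, (phistar v y < +oo)%E <-> K v y) /\
      (* (6) *)
      (relint_K v c -> exists lam, posvec lam /\ Dratio v c lam = Dc v c).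
Proof.
(* zero vectors [v i] are harmless, and [n <= m] follows from [row_full] *)
move=> _ v_full _ c_gt0 c_sum.
split; first exact: phi_convex.
split; first exact: Dc_expeR.
split; first exact: Dc_gt0.
split; first exact: Dc_attainedP.
split; first exact: phistar_lt_pinftyP.
by move=> /(phistar_attained v_full c_gt0 c_sum) /(Dc_attainedP v_full).
Qed.
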